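(* In the discrete-weight (geometric) model, let $\gamma>0$ be a fixed constant and let $\bar{\boldsymbol\theta}^*=\bar{\boldsymbol\theta}^*_n$ satisfy $q_n\le\bar\alpha_i^*+\bar\beta_j^*\le Q_n$ for all $i\ne j$, with $0<q_n\le Q_n$. Put $m_n=e^{Q_n}/(e^{Q_n}-1)^2$ and $M_n=e^{q_n}/(e^{q_n}-1)^2$ and assume $M_n/m_n=o(n)$. Suppose the realized degrees satisfy \[ \max\Bigl\{\max_{1\le i\le n}|d_i-\mathbb{E}(d_i)|,\ \max_{1\le j\le n}|b_j-\mathbb{E}(b_j)|\Bigr\}\le\sqrt{\frac{8(n-1)\log n}{\gamma q_n^2}} . \] Then, with an implicit constant depending only on $\gamma$, for all sufficiently large $n$, \[ r:=\bigl\|[F'(\bar{\boldsymbol\theta}^* )]^{-1}F(\bar{\boldsymbol\theta}^* )\bigr\|_\infty= O\Bigl(q_n^{-1}\bigl(e^{3Q_n}(1+q_n^{-4})+e^{Q_n}\bigr)\sqrt{\frac{\log n}{n}}\Bigr). \]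
   Context: Discrete-weight model: Let $n\ge2$. Parameters $\bar{\boldsymbol\theta}=(\bar\alpha_1,\dots,\bar\alpha_n,\bar\beta_1,\dots,\bar\beta_{n-1})^\top$, with $\bar\beta_n:=0$ and $\bar\alpha_i+\bar\beta_j>0$ for $i\ne j$. Under $\mathbb{P}_{\bar{\boldsymbol\theta}}$, $A=(a_{i,j})$ has $a_{i,i}=0$ and mutually independent entries $a_{i,j}$ ($i\ne j$) with $\mathbb{P}(a_{i,j}=a)=(1-e^{-(\bar\alpha_i+\bar\beta_j)})e^{-(\bar\alpha_i+\bar\beta_j)a}$, $a=0,1,2,\dots$. $d_i=\sum_{j\ne i}a_{i,j}$, $b_j=\sum_{i\ne j}a_{i,j}$; expectations are under $\mathbb{P}_{\bar{\boldsymbol\theta}^*}$. With $f(x)=1/(e^x-1)$, $F:\{\bar{\boldsymbol\theta}\}\to\mathbb{R}^{2n-1}$ is $F_i(\bar{\boldsymbol\theta})=d_i-\sum_{k\ne i}f(\bar\alpha_i+\bar\beta_k)$ ($i\le n$), $F_{n+j}(\bar{\boldsymbol\theta})=b_j-\sum_{k\ne j}f(\bar\alpha_k+\bar\beta_j)$ ($j\le n-1$), and $F'$ is its Jacobian matrix. *)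

From Stdlib Require Import Reals Lra Lia Arith List.
Open Scope R_scope.

Definition sumR (N : nat) (g : nat -> R) : R :=
  fold_right Rplus 0 (map g (seq 0 N)).

(* f(x) = 1/(e^x - 1); also the mean of a_{i,j} ~ Geom with parameter x. *)
Definition fgeo (x : R) : R := 1 / (exp x - 1).

(* Parameter vector theta : nat -> R, indices 0 .. 2n-2 (0-based):
   alpha_i = theta i (i < n), beta_j = theta (n + j) (j < n-1), beta_{n-1} := 0. *)
Definition alpha_of (theta : nat -> R) (i : nat) : R := theta i.
Definition beta_of (n : nat) (theta : nat -> R) (j : nat) : R :=
  if (j <? n - 1)%nat then theta (n + j)%nat else 0.

Definition outdeg (n : nat) (A : nat -> nat -> nat) (i : nat) : R :=
  sumR n (fun j => if (j =? i)%nat then 0 else INR (A i j)).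
Definition indeg (n : nat) (A : nat -> nat -> nat) (j : nat) : R :=
  sumR n (fun i => if (i =? j)%nat then 0 else INR (A i j)).

Definition Eoutdeg (n : nat) (theta : nat -> R) (i : nat) : R :=
  sumR n (fun k => if (k =? i)%nat then 0
                   else fgeo (alpha_of theta i + beta_of n theta k)).
Definition Eindeg (n : nat) (theta : nat -> R) (j : nat) : R :=
  sumR n (fun k => if (k =? j)%nat then 0
                   else fgeo (alpha_of theta k + beta_of n theta j)).

Definition Fmap (n : nat) (A : nat -> nat -> nat) (theta : nat -> R) (k : nat) : R :=
  if (k <? n)%nat then outdeg n A k - Eoutdeg n theta k
  else indeg n A (k - n) - Eindeg n theta (k - n).

Definition upd (theta : nat -> R) (l : nat) (t : R) : nat -> R :=
  fun m => if (m =? l)%nat then t else theta m.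

Definition is_jacobian (n : nat) (A : nat -> nat -> nat) (theta : nat -> R)
    (J : nat -> nat -> R) : Prop :=
  forall k l, (k < 2 * n - 1)%nat -> (l < 2 * n - 1)%nat ->
    derivable_pt_lim (fun t => Fmap n A (upd theta l t) k) (theta l) (J k l).

Definition is_inverse (N : nat) (J B : nat -> nat -> R) : Prop :=
  forall i k, (i < N)%nat -> (k < N)%nat ->
    sumR N (fun l => J i l * B l k) = (if (i =? k)%nat then 1 else 0) /\
    sumR N (fun l => B i l * J l k) = (if (i =? k)%nat then 1 else 0).

Definition m_n (Q : R) : R := exp Q / (exp Q - 1) ^ 2.
Definition M_n (q : R) : R := exp q / (exp q - 1) ^ 2.

Definition little_o_n (u : nat -> R) : Prop :=
  forall eps, 0 < eps -> exists N, forall n, (N <= n)%nat -> Rabs (u n) <= eps * INR n.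

(* Write [x = (α, β)] with [β_{n-1} = 0].  [F'(θ) x] is the vector of row and column sums of
   the matrix [v_ij (α_i + β_j)] with [v_ij = geo_var (α_i + β_j)] in [[m, M]], [m = geo_var Q],
   [M = geo_var q]; since all row sums add up to all column sums, the column [n - 1] that [F]
   omits is controlled too.  A maximum principle bounds [x]: each [- β_j] is a weighted mean of
   the [α_i], and each [α_i] a mean of the [- β_j] with weights at least [m / ((n - 1) M)], so if
   all these sums are at most [E], the spread of [α], and then [x] itself, is [O(E M / (n m²))].
   With [E = 0] this makes [F'(θ)] injective, hence invertible; for [x = F'(θ)⁻¹ F(θ)] the sums
   are the degree residuals, and [M / m² ≤ e^{3Q} / q²] gives the rate.  The bound holds for
   every [n ≥ 3]. *)

From Stdlib Require Import Reals Lra Lia List.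
From Coquelicot Require Import Coquelicot.
From mathcomp Require all_boot all_algebra Rstruct.
Open Scope R_scope.

Lemma sumR_S (N : nat) (g : nat -> R) : sumR (S N) g = sumR N g + g N.
Proof.
unfold sumR. rewrite seq_S, map_app, fold_right_app. simpl.
rewrite Rplus_0_r. induction (map g (seq 0 N)) as [|a s IH]; simpl; [ring | rewrite IH; ring].
Qed.

Lemma sumR_ext N f g : (forall i, (i < N)%nat -> f i = g i) -> sumR N f = sumR N g.
Proof.
induction N as [|N IH]; intros H; [reflexivity|].
rewrite !sumR_S, IH, H; auto.
Qed.

Lemma sumR_const N c : sumR N (fun _ => c) = INR N * c.
Proof. induction N as [|N IH]; [unfold sumR; simpl; ring | rewrite sumR_S, IH, S_INR; ring]. Qed.

Lemma sumR_zero N f : (forall i, (i < N)%nat -> f i = 0) -> sumR N f = 0.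
Proof. intros H. rewrite (sumR_ext N f (fun _ => 0)), sumR_const by exact H. ring. Qed.

Lemma sumR_plus N f g : sumR N (fun i => f i + g i) = sumR N f + sumR N g.
Proof. induction N as [|N IH]; [unfold sumR; simpl; ring | rewrite !sumR_S, IH; ring]. Qed.

Lemma sumR_scal N c f : sumR N (fun i => c * f i) = c * sumR N f.
Proof. induction N as [|N IH]; [unfold sumR; simpl; ring | rewrite !sumR_S, IH; ring]. Qed.

Lemma sumR_le N f g : (forall i, (i < N)%nat -> f i <= g i) -> sumR N f <= sumR N g.
Proof.
induction N as [|N IH]; intros H; [unfold sumR; simpl; lra|].
rewrite !sumR_S. apply Rplus_le_compat; auto.
Qed.

Lemma sumR_swap N L (h : nat -> nat -> R) :
  sumR N (fun i => sumR L (fun j => h i j)) = sumR L (fun j => sumR N (fun i => h i j)).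
Proof.
induction N as [|N IH].
- symmetry. apply sumR_zero. reflexivity.
- rewrite sumR_S, IH, <- sumR_plus. apply sumR_ext. intros. rewrite sumR_S. reflexivity.
Qed.

Definition basis (l : nat) : nat -> R := fun k => if (k =? l)%nat then 1 else 0.

Lemma sumR_basis N k x : (k < N)%nat -> sumR N (fun l => basis l k * x l) = x k.
Proof.
induction N as [|N IH]; intros Hk; [lia|]. rewrite sumR_S. unfold basis at 2.
destruct (Nat.eqb_spec k N) as [->|].
- rewrite sumR_zero; [ring|]. intros l Hl. unfold basis.
  replace (N =? l)%nat with false by (symmetry; apply Nat.eqb_neq; lia). ring.
- rewrite IH by lia. ring.
Qed.

Definition sum_skip (N i : nat) (g : nat -> R) : R :=
  sumR N (fun j => if (j =? i)%nat then 0 else g j).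

Lemma sum_skip_ext N i f g :
  (forall j, (j < N)%nat -> j <> i -> f j = g j) -> sum_skip N i f = sum_skip N i g.
Proof.
intros H. apply sumR_ext. intros j Hj. destruct (Nat.eqb_spec j i); auto.
Qed.

Lemma sum_skip_le N i f g :
  (forall j, (j < N)%nat -> j <> i -> f j <= g j) -> sum_skip N i f <= sum_skip N i g.
Proof.
intros H. apply sumR_le. intros j Hj. destruct (Nat.eqb_spec j i); [lra|auto].
Qed.

Lemma sum_skip_nonneg N i f :
  (forall j, (j < N)%nat -> j <> i -> 0 <= f j) -> 0 <= sum_skip N i f.
Proof.
intros H. rewrite <- (sumR_zero N (fun _ => 0)) by reflexivity.
apply sumR_le. intros j Hj. destruct (Nat.eqb_spec j i); [lra | auto].
Qed.

Lemma sum_skip_plus N i f g :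
  sum_skip N i (fun j => f j + g j) = sum_skip N i f + sum_skip N i g.
Proof.
unfold sum_skip. rewrite <- sumR_plus. apply sumR_ext. intros j _. destruct (j =? i)%nat; ring.
Qed.

Lemma sum_skip_scal N i c f : sum_skip N i (fun j => c * f j) = c * sum_skip N i f.
Proof.
unfold sum_skip. rewrite <- sumR_scal. apply sumR_ext. intros j _. destruct (j =? i)%nat; ring.
Qed.

Lemma sum_skip_minus N i f g :
  sum_skip N i (fun j => f j - g j) = sum_skip N i f - sum_skip N i g.
Proof.
replace (sum_skip N i f - sum_skip N i g) with (sum_skip N i f + -1 * sum_skip N i g) by ring.
rewrite <- sum_skip_scal, <- sum_skip_plus. apply sum_skip_ext. intros; ring.
Qed.

Lemma sum_skip_eq N i g : (i < N)%nat -> sum_skip N i g = sumR N g - g i.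
Proof.
intros Hi. unfold sum_skip.
rewrite (sumR_ext N _ (fun j => g j + -1 * (basis j i * g j))).
- rewrite sumR_plus, sumR_scal, sumR_basis by exact Hi. ring.
- intros j _. unfold basis.
  destruct (Nat.eqb_spec j i), (Nat.eqb_spec i j); subst; try congruence; ring.
Qed.

Lemma sum_skip_const N i c : (i < N)%nat -> sum_skip N i (fun _ => c) = (INR N - 1) * c.
Proof. intros Hi. rewrite sum_skip_eq, sumR_const by exact Hi. ring. Qed.

Lemma sum_skip_between N i f lo hi : (i < N)%nat ->
  (forall j, (j < N)%nat -> j <> i -> lo <= f j <= hi) ->
  (INR N - 1) * lo <= sum_skip N i f <= (INR N - 1) * hi.
Proof.
intros Hi H. rewrite <- (sum_skip_const N i lo), <- (sum_skip_const N i hi) by exact Hi.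
split; apply sum_skip_le; intros j Hj Hji; apply H; auto.
Qed.

Lemma sum_skip_swap N L i (h : nat -> nat -> R) :
  sumR L (fun l => sum_skip N i (fun j => h j l)) = sum_skip N i (fun j => sumR L (h j)).
Proof.
unfold sum_skip. rewrite sumR_swap. apply sumR_ext. intros j _.
destruct (j =? i)%nat; [apply sumR_zero; reflexivity | reflexivity].
Qed.

Lemma sum_skip_weighted_upper N i w y c hi :
  (forall j, (j < N)%nat -> j <> i -> c <= w j /\ y j <= hi) ->
  sum_skip N i (fun j => w j * y j) <= hi * sum_skip N i w - c * sum_skip N i (fun j => hi - y j).
Proof.
intros H. rewrite <- !sum_skip_scal, <- sum_skip_minus. apply sum_skip_le.
intros j Hj Hji. destruct (H j Hj Hji). nra.
Qed.

Lemma sum_skip_weighted_lower N i w y c lo :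
  (forall j, (j < N)%nat -> j <> i -> c <= w j /\ lo <= y j) ->
  lo * sum_skip N i w + c * sum_skip N i (fun j => y j - lo) <= sum_skip N i (fun j => w j * y j).
Proof.
intros H. rewrite <- !sum_skip_scal, <- sum_skip_plus. apply sum_skip_le.
intros j Hj Hji. destruct (H j Hj Hji). nra.
Qed.

Definition rowsum (n : nat) (g : nat -> nat -> R) (i : nat) : R := sum_skip n i (fun j => g i j).
Definition colsum (n : nat) (g : nat -> nat -> R) (j : nat) : R := sum_skip n j (fun i => g i j).
Definition margin (n : nat) (g : nat -> nat -> R) (k : nat) : R :=
  if (k <? n)%nat then rowsum n g k else colsum n g (k - n).

Lemma margin_row n g i : (i < n)%nat -> margin n g i = rowsum n g i.
Proof. intros Hi. unfold margin. destruct (Nat.ltb_spec i n); [reflexivity | lia]. Qed.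

Lemma margin_col n g j : margin n g (n + j) = colsum n g j.
Proof.
unfold margin. destruct (Nat.ltb_spec (n + j) n); [lia|]. f_equal. lia.
Qed.

Lemma sumR_rowsum n g : sumR n (rowsum n g) = sumR n (colsum n g).
Proof.
unfold rowsum, colsum, sum_skip. rewrite sumR_swap. apply sumR_ext. intros j _.
apply sumR_ext. intros i _. rewrite Nat.eqb_sym. reflexivity.
Qed.

Lemma colsum_last n g : (1 <= n)%nat ->
  colsum n g (n - 1) =
  sumR n (fun i => margin n g i) - sumR (n - 1) (fun j => margin n g (n + j)).
Proof.
intros Hn.
rewrite (sumR_ext n _ (rowsum n g)) by (intros; apply margin_row; auto).
rewrite (sumR_ext (n - 1) _ (colsum n g)) by (intros; apply margin_col).
rewrite sumR_rowsum. destruct n as [|n]; [lia|].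
replace (S n - 1)%nat with n by lia. rewrite sumR_S. ring.
Qed.

Lemma exists_argmax N (f : nat -> R) : (0 < N)%nat ->
  exists i0, (i0 < N)%nat /\ forall i, (i < N)%nat -> f i <= f i0.
Proof.
induction N as [|N IH]; intros HN; [lia|].
destruct (Nat.eq_dec N 0) as [->|].
- exists 0%nat. split; [lia|]. intros i Hi. replace i with 0%nat by lia. lra.
- destruct IH as [i0 [Hi0 Hmax]]; [lia|].
  destruct (Rle_dec (f N) (f i0)).
  + exists i0. split; [lia|]. intros i Hi.
    destruct (Nat.eq_dec i N) as [->|]; [assumption | apply Hmax; lia].
  + exists N. split; [lia|]. intros i Hi.
    destruct (Nat.eq_dec i N) as [->|]; [lra|]. specialize (Hmax i ltac:(lia)). lra.
Qed.

Lemma Rabs_le_between a b : Rabs a <= b -> - b <= a <= b.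
Proof. intros H. pose proof (Rle_abs a). pose proof (Rle_abs (- a)). rewrite Rabs_Ropp in *. lra. Qed.

Lemma mean_shift U W b lo hi E e : 0 < W -> lo * W <= U <= hi * W ->
  Rabs (U + b * W) <= E -> E <= e * W -> lo - e <= - b <= hi + e.
Proof. intros HW HU Hr HE. apply Rabs_le_between in Hr. split; nra. Qed.

Section MaximumPrinciple.

Variables (n : nat) (v : nat -> nat -> R) (m M E : R) (al be : nat -> R).
Hypothesis n_ge3 : (3 <= n)%nat.
Hypothesis m_pos : 0 < m.
Hypothesis m_le_M : m <= M.
Hypothesis E_ge0 : 0 <= E.
Hypothesis v_bounds : forall i j, (i < n)%nat -> (j < n)%nat -> i <> j -> m <= v i j <= M.
Hypothesis be_last : be (n - 1)%nat = 0.
Hypothesis row_small :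
  forall i, (i < n)%nat -> Rabs (rowsum n (fun i j => v i j * (al i + be j)) i) <= E.
Hypothesis col_small :
  forall j, (j < n)%nat -> Rabs (colsum n (fun i j => v i j * (al i + be j)) j) <= E.

Let nn := INR n - 1.
Let e := E / (nn * m).
Let rho := m / (nn * M).

Let nn_ge2 : 2 <= nn.
Proof.
unfold nn. assert (3 <= INR n) by (replace 3 with (INR 3) by (simpl; ring); apply le_INR; lia).
lra.
Qed.

Let e_ge0 : 0 <= e.
Proof. unfold e. apply Rmult_le_pos; [lra | apply Rlt_le, Rinv_0_lt_compat; nra]. Qed.

Let e_scaled : e * (nn * m) = E.
Proof. unfold e. field. split; lra. Qed.

Let rho_pos : 0 < rho.
Proof. unfold rho. apply Rmult_lt_0_compat; [lra | apply Rinv_0_lt_compat; nra]. Qed.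

Let rho_scaled : rho * (nn * M) = m.
Proof. unfold rho. field. split; lra. Qed.

Let row_weight i : (i < n)%nat -> nn * m <= rowsum n v i <= nn * M.
Proof. intros Hi. apply sum_skip_between; auto. Qed.

Let col_weight j : (j < n)%nat -> nn * m <= colsum n v j <= nn * M.
Proof. intros Hj. apply sum_skip_between; auto. Qed.

(* Column [j] makes [- be j] a mean of the [al i], up to [e]. *)
Lemma neg_be_between lo hi : (forall i, (i < n)%nat -> lo <= al i <= hi) ->
  forall j, (j < n)%nat -> lo - e <= - be j <= hi + e.
Proof.
intros Hal j Hj. destruct (col_weight j Hj) as [W1 W2].
assert (Hsplit : colsum n (fun i j => v i j * (al i + be j)) j
                 = sum_skip n j (fun i => v i j * al i) + be j * colsum n v j).
{ unfold colsum. rewrite <- sum_skip_scal, <- sum_skip_plus. apply sum_skip_ext. intros; ring. }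
apply (mean_shift (sum_skip n j (fun i => v i j * al i)) (colsum n v j) (be j) lo hi E e).
- nra.
- split.
  + pose proof (sum_skip_weighted_lower n j (fun i => v i j) al 0 lo) as H.
    rewrite Rmult_0_l, Rplus_0_r in H. apply H.
    intros i Hi Hij. destruct (v_bounds i j Hi Hj Hij). split; [lra | apply Hal; auto].
  + pose proof (sum_skip_weighted_upper n j (fun i => v i j) al 0 hi) as H.
    rewrite Rmult_0_l, Rminus_0_r in H. apply H.
    intros i Hi Hij. destruct (v_bounds i j Hi Hj Hij). split; [lra | apply Hal; auto].
- rewrite <- Hsplit. apply col_small; auto.
- rewrite <- e_scaled. apply Rmult_le_compat_l; [exact e_ge0 | exact W1].
Qed.

(* Row [i] makes [al i] a mean of the [- be j] with weights at least [rho], up to [e]. *)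
Lemma al_between glo ghi : (forall j, (j < n)%nat -> glo <= - be j <= ghi) ->
  forall i, (i < n)%nat ->
    glo - e + rho * sum_skip n i (fun j => - be j - glo) <= al i <=
    ghi + e - rho * sum_skip n i (fun j => ghi + be j).
Proof.
intros Hbe i Hi. destruct (row_weight i Hi) as [V1 V2].
set (V := rowsum n v i) in *.
set (T := sum_skip n i (fun j => v i j * - be j)).
set (X := sum_skip n i (fun j => ghi + be j)).
set (Y := sum_skip n i (fun j => - be j - glo)).
assert (Hsplit : rowsum n (fun i j => v i j * (al i + be j)) i = al i * V - T).
{ unfold V, T, rowsum. rewrite <- sum_skip_scal, <- sum_skip_minus. apply sum_skip_ext. intros; ring. }
assert (Hr := row_small i Hi). rewrite Hsplit in Hr. apply Rabs_le_between in Hr.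
assert (HE : E <= e * V) by (rewrite <- e_scaled; apply Rmult_le_compat_l; [exact e_ge0 | exact V1]).
assert (Hrho : rho * V <= m) by (rewrite <- rho_scaled; apply Rmult_le_compat_l; lra).
assert (HX : 0 <= X) by (apply sum_skip_nonneg; intros j Hj _; destruct (Hbe j Hj); lra).
assert (HY : 0 <= Y) by (apply sum_skip_nonneg; intros j Hj _; destruct (Hbe j Hj); lra).
assert (HT1 : T <= ghi * V - m * X).
{ replace X with (sum_skip n i (fun j => ghi - - be j)) by (apply sum_skip_ext; intros; ring).
  apply sum_skip_weighted_upper. intros j Hj Hji.
  destruct (v_bounds i j Hi Hj (not_eq_sym Hji)), (Hbe j Hj). split; lra. }
assert (HT2 : glo * V + m * Y <= T).
{ apply sum_skip_weighted_lower. intros j Hj Hji.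
  destruct (v_bounds i j Hi Hj (not_eq_sym Hji)), (Hbe j Hj). split; lra. }
split; apply (Rmult_le_reg_r V); nra.
Qed.

Lemma al_spread i0 i1 : (i0 < n)%nat -> (i1 < n)%nat ->
  (forall i, (i < n)%nat -> al i1 <= al i <= al i0) -> al i0 - al i1 <= 8 * e * M / m.
Proof.
intros H0 H1 Hext.
set (glo := al i1 - e). set (ghi := al i0 + e).
assert (Hbe := neg_be_between _ _ Hext). fold glo ghi in Hbe.
destruct (al_between glo ghi Hbe i0 H0) as [_ Hup].
destruct (al_between glo ghi Hbe i1 H1) as [Hlow _].
set (X := sum_skip n i0 (fun j => ghi + be j)) in Hup.
set (Y := sum_skip n i1 (fun j => - be j - glo)) in Hlow.
(* Dropping one term from each of two sums that together count [ghi - glo] exactly [n] times. *)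
assert (HXY : (nn - 1) * (ghi - glo) <= X + Y).
{ unfold X, Y. rewrite !sum_skip_eq by assumption.
  assert (Hsum : sumR n (fun j => ghi + be j) + sumR n (fun j => - be j - glo) = INR n * (ghi - glo))
    by (rewrite <- sumR_plus, <- sumR_const; apply sumR_ext; intros; ring).
  destruct (Hbe i0 H0), (Hbe i1 H1). unfold nn. lra. }
set (D := al i0 - al i1).
assert (HD : rho * (nn - 1) * D <= 4 * e).
{ assert (0 <= rho * (nn - 1) * (2 * e)).
  { apply Rmult_le_pos; [apply Rmult_le_pos |]; lra. }
  assert (rho * ((nn - 1) * (ghi - glo)) <= rho * (X + Y)) by (apply Rmult_le_compat_l; lra).
  unfold D, ghi, glo in *. nra. }
assert (HmD : m * (nn - 1) * D <= 8 * e * M * (nn - 1)).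
{ replace (m * (nn - 1) * D) with (rho * (nn - 1) * D * (nn * M)) by (rewrite <- rho_scaled; ring).
  assert (0 <= e * M) by nra.
  apply Rle_trans with (4 * e * (nn * M)); [apply Rmult_le_compat_r; nra | nra]. }
apply (Rmult_le_reg_r (m * (nn - 1))); [nra|].
replace (8 * e * M / m * (m * (nn - 1))) with (8 * e * M * (nn - 1)) by (field; lra). lra.
Qed.

Lemma maximum_principle i : (i < n)%nat ->
  Rabs (al i) <= 10 * E * M / ((INR n - 1) * m * m) /\
  Rabs (be i) <= 10 * E * M / ((INR n - 1) * m * m).
Proof.
intros Hi.
destruct (exists_argmax n al) as [i0 [H0 Hmax]]; [lia|].
destruct (exists_argmax n (fun i => - al i)) as [i1 [H1 Hmin]]; [lia|].
assert (Hext : forall i, (i < n)%nat -> al i1 <= al i <= al i0)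
  by (intros k Hk; specialize (Hmax k Hk); specialize (Hmin k Hk); lra).
assert (HD := al_spread i0 i1 H0 H1 Hext).
assert (Hbe := neg_be_between _ _ Hext).
(* [be (n - 1) = 0] puts [0] between [al i1 - e] and [al i0 + e]. *)
destruct (Hbe (n - 1)%nat) as [B1 B2]; [lia|]. rewrite be_last in B1, B2.
assert (Hfinal : 2 * e + 8 * e * M / m <= 10 * E * M / ((INR n - 1) * m * m)).
{ fold nn. rewrite <- e_scaled.
  replace (10 * (e * (nn * m)) * M / (nn * m * m)) with (2 * e * (M / m) + 8 * e * M / m)
    by (field; split; lra).
  assert (1 <= M / m) by (apply (Rmult_le_reg_r m); [lra|]; field_simplify; lra). nra. }
destruct (Hbe i Hi). specialize (Hext i Hi). split; apply Rabs_le; lra.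
Qed.

End MaximumPrinciple.

Definition edge_param (n : nat) (th : nat -> R) (i j : nat) : R :=
  alpha_of th i + beta_of n th j.

Definition residual (n : nat) (A : nat -> nat -> nat) (th : nat -> R) (i j : nat) : R :=
  INR (A i j) - fgeo (edge_param n th i j).

(* [geo_var = - fgeo'] is the variance of a geometric weight; [m_n Q] and [M_n q] are its
   values at [Q] and [q]. *)
Definition geo_var (x : R) : R := exp x / (exp x - 1) ^ 2.

(* [θ ↦ α_i + β_j] is linear, with partial derivative [edge_param n (basis l) i j] in [θ_l]. *)
Definition jacobian (n : nat) (th : nat -> R) (k l : nat) : R :=
  margin n (fun i j => geo_var (edge_param n th i j) * edge_param n (basis l) i j) k.

Lemma rowsum_residual n A th i : rowsum n (residual n A th) i = outdeg n A i - Eoutdeg n th i.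
Proof. apply sum_skip_minus. Qed.

Lemma colsum_residual n A th j : colsum n (residual n A th) j = indeg n A j - Eindeg n th j.
Proof. apply sum_skip_minus. Qed.

Lemma Fmap_margin n A th k : Fmap n A th k = margin n (residual n A th) k.
Proof.
unfold Fmap, margin. destruct (k <? n)%nat; symmetry;
  [apply rowsum_residual | apply colsum_residual].
Qed.

Lemma edge_param_upd n th l t i j :
  edge_param n (upd th l t) i j = edge_param n th i j + edge_param n (basis l) i j * (t - th l).
Proof.
unfold edge_param, alpha_of, beta_of, upd, basis.
destruct (Nat.eqb_spec i l), (j <? n - 1)%nat; try destruct (Nat.eqb_spec (n + j) l); subst; ring.
Qed.

Lemma edge_param_basis_sum n x i j : (i < n)%nat -> (j < n)%nat ->
  sumR (2 * n - 1) (fun l => edge_param n (basis l) i j * x l) = edge_param n x i j.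
Proof.
intros Hi Hj. unfold edge_param, alpha_of, beta_of.
rewrite (sumR_ext _ _ (fun l => basis l i * x l +
           (if (j <? n - 1)%nat then basis l (n + j) else 0) * x l)) by (intros; ring).
rewrite sumR_plus, sumR_basis by lia.
destruct (Nat.ltb_spec j (n - 1)).
- rewrite sumR_basis by lia. reflexivity.
- rewrite sumR_zero; [ring | intros; ring].
Qed.

Lemma margin_basis_sum n (g : nat -> nat -> R) x k : (k < 2 * n - 1)%nat ->
  sumR (2 * n - 1) (fun l => margin n (fun i j => g i j * edge_param n (basis l) i j) k * x l) =
  margin n (fun i j => g i j * edge_param n x i j) k.
Proof.
intros Hk. unfold margin, rowsum, colsum. destruct (Nat.ltb_spec k n).
- rewrite (sumR_ext _ _ (fun l => sum_skip n k (fun j => x l * (g k j * edge_param n (basis l) k j))))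
    by (intros; rewrite sum_skip_scal; ring).
  rewrite sum_skip_swap. apply sum_skip_ext. intros j Hj _.
  rewrite (sumR_ext _ _ (fun l => g k j * (edge_param n (basis l) k j * x l))) by (intros; ring).
  rewrite sumR_scal, edge_param_basis_sum; auto.
- rewrite (sumR_ext _ _ (fun l => sum_skip n (k - n)
             (fun i => x l * (g i (k - n)%nat * edge_param n (basis l) i (k - n)))))
    by (intros; rewrite sum_skip_scal; ring).
  rewrite sum_skip_swap. apply sum_skip_ext. intros i Hi _.
  rewrite (sumR_ext _ _ (fun l => g i (k - n)%nat * (edge_param n (basis l) i (k - n) * x l)))
    by (intros; ring).
  rewrite sumR_scal, edge_param_basis_sum; auto. lia.
Qed.

Lemma geo_var_pos x : 0 < x -> 0 < geo_var x.
Proof.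
intros Hx. assert (1 < exp x) by (rewrite <- exp_0; apply exp_increasing; lra).
unfold geo_var. apply Rdiv_lt_0_compat; [apply exp_pos | apply pow_lt; lra].
Qed.

Lemma geo_var_antimono a b : 0 < a -> a <= b -> geo_var b <= geo_var a.
Proof.
intros Ha Hab. unfold geo_var.
assert (HA : 1 < exp a) by (rewrite <- exp_0; apply exp_increasing; lra).
assert (HAB : exp a <= exp b) by (destruct (Req_dec a b); [subst; lra | apply Rlt_le, exp_increasing; lra]).
set (x := exp a) in *. set (y := exp b) in *.
(* [t / (t - 1) ^ 2] decreases on [t > 1]: the difference of cross products is [(y - x) (x y - 1)]. *)
apply Rmult_le_reg_r with ((x - 1) ^ 2 * (y - 1) ^ 2); [apply Rmult_lt_0_compat; apply pow_lt; lra|].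
replace (y / (y - 1) ^ 2 * ((x - 1) ^ 2 * (y - 1) ^ 2)) with (y * (x - 1) ^ 2) by (field; lra).
replace (x / (x - 1) ^ 2 * ((x - 1) ^ 2 * (y - 1) ^ 2)) with (x * (y - 1) ^ 2) by (field; lra).
assert (0 <= (y - x) * (x * y - 1)) by (apply Rmult_le_pos; nra). nra.
Qed.

Lemma fgeo_derive_affine s d t0 : 0 < s ->
  derivable_pt_lim (fun t => fgeo (s + d * (t - t0))) t0 (- (geo_var s * d)).
Proof.
intros Hs. apply is_derive_Reals. unfold fgeo.
assert (Hne : exp s - 1 <> 0) by (assert (1 < exp s) by (rewrite <- exp_0; apply exp_increasing; lra); lra).
auto_derive; rewrite Rplus_opp_r, Rmult_0_r, Rplus_0_r; [exact Hne | unfold geo_var; field; exact Hne].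
Qed.

Lemma residual_derive n A th l i j : 0 < edge_param n th i j ->
  derivable_pt_lim (fun t => residual n A (upd th l t) i j) (th l)
    (geo_var (edge_param n th i j) * edge_param n (basis l) i j).
Proof.
intros Hpos.
apply (derivable_pt_lim_ext
  (fun t => INR (A i j) - fgeo (edge_param n th i j + edge_param n (basis l) i j * (t - th l)))).
{ intros t. unfold residual. rewrite edge_param_upd. reflexivity. }
replace (geo_var (edge_param n th i j) * edge_param n (basis l) i j)
  with (0 - - (geo_var (edge_param n th i j) * edge_param n (basis l) i j)) by ring.
apply (derivable_pt_lim_minus (fun _ => INR (A i j))).
- apply derivable_pt_lim_const.
- apply fgeo_derive_affine. exact Hpos.
Qed.

Lemma derivable_pt_lim_sumR N (h : R -> nat -> R) (d : nat -> R) x :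
  (forall j, (j < N)%nat -> derivable_pt_lim (fun t => h t j) x (d j)) ->
  derivable_pt_lim (fun t => sumR N (h t)) x (sumR N d).
Proof.
induction N as [|N IH]; intros H.
- apply derivable_pt_lim_const.
- apply (derivable_pt_lim_ext (fun t => sumR N (h t) + h t N)); [intros; symmetry; apply sumR_S|].
  rewrite sumR_S. apply (derivable_pt_lim_plus (fun t => sumR N (h t)) (fun t => h t N)); auto.
Qed.

Lemma derivable_pt_lim_sum_skip N i (h : R -> nat -> R) (d : nat -> R) x :
  (forall j, (j < N)%nat -> j <> i -> derivable_pt_lim (fun t => h t j) x (d j)) ->
  derivable_pt_lim (fun t => sum_skip N i (h t)) x (sum_skip N i d).
Proof.
intros H. apply (derivable_pt_lim_sumR N (fun t j => if (j =? i)%nat then 0 else h t j)).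
intros j Hj. destruct (Nat.eqb_spec j i); [apply derivable_pt_lim_const | auto].
Qed.

Lemma derivable_pt_lim_margin n (g : R -> nat -> nat -> R) (d : nat -> nat -> R) x k :
  (k < 2 * n - 1)%nat ->
  (forall i j, (i < n)%nat -> (j < n)%nat -> i <> j -> derivable_pt_lim (fun t => g t i j) x (d i j)) ->
  derivable_pt_lim (fun t => margin n (g t) k) x (margin n d k).
Proof.
intros Hk H. unfold margin, rowsum, colsum. destruct (Nat.ltb_spec k n);
  apply derivable_pt_lim_sum_skip; intros; apply H; auto; lia.
Qed.

Lemma jacobian_correct n A th :
  (forall i j, (i < n)%nat -> (j < n)%nat -> i <> j -> 0 < edge_param n th i j) ->
  is_jacobian n A th (jacobian n th).
Proof.
intros Hpos k l Hk Hl.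
apply (derivable_pt_lim_ext (fun t => margin n (residual n A (upd th l t)) k));
  [intros; symmetry; apply Fmap_margin|].
apply derivable_pt_lim_margin; [exact Hk|].
intros i j Hi Hj Hij. apply residual_derive; auto.
Qed.

Lemma jacobian_solution_bound n th (res : nat -> nat -> R) x m M E :
  (3 <= n)%nat -> 0 < m -> m <= M -> 0 <= E ->
  (forall i j, (i < n)%nat -> (j < n)%nat -> i <> j -> m <= geo_var (edge_param n th i j) <= M) ->
  (forall k, (k < 2 * n - 1)%nat ->
     sumR (2 * n - 1) (fun l => jacobian n th k l * x l) = margin n res k) ->
  (forall i, (i < n)%nat -> Rabs (rowsum n res i) <= E) ->
  (forall j, (j < n)%nat -> Rabs (colsum n res j) <= E) ->
  forall k, (k < 2 * n - 1)%nat -> Rabs (x k) <= 10 * E * M / ((INR n - 1) * m * m).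
Proof.
intros Hn Hm HmM HE Hv HJ Hrow Hcol k Hk.
set (v := fun i j => geo_var (edge_param n th i j)).
set (G := fun i j => v i j * edge_param n x i j).
assert (HG : forall k, (k < 2 * n - 1)%nat -> margin n G k = margin n res k)
  by (intros; rewrite <- HJ by assumption; unfold jacobian; rewrite margin_basis_sum; auto).
assert (Hrows : forall i, (i < n)%nat -> Rabs (rowsum n G i) <= E).
{ intros i Hi. rewrite <- margin_row, HG, margin_row by lia. auto. }
(* The last column is not a component of [F]; it is recovered from the others. *)
assert (Hcols : forall j, (j < n)%nat -> Rabs (colsum n G j) <= E).
{ intros j Hj. destruct (Nat.eq_dec j (n - 1)) as [->|].
  - rewrite colsum_last by lia.
    rewrite (sumR_ext n _ (margin n res)), (sumR_ext (n - 1) _ (fun j => margin n res (n + j)))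
      by (intros; apply HG; lia).
    rewrite <- colsum_last by lia. auto.
  - rewrite <- margin_col, HG, margin_col by lia. auto. }
assert (Hbe : beta_of n x (n - 1) = 0) by (unfold beta_of; rewrite Nat.ltb_irrefl; reflexivity).
assert (HP := maximum_principle n v m M E x (beta_of n x) Hn Hm HmM HE Hv Hbe Hrows Hcols).
destruct (Nat.ltb_spec k n) as [Hkn | Hkn]; [apply HP; exact Hkn|].
destruct (HP (k - n)%nat) as [_ Hb]; [lia|].
unfold beta_of in Hb. destruct (Nat.ltb_spec (k - n) (n - 1)); [|lia].
replace (n + (k - n))%nat with k in Hb by lia. exact Hb.
Qed.

Lemma jacobian_injective n th x m M : (3 <= n)%nat -> 0 < m -> m <= M ->
  (forall i j, (i < n)%nat -> (j < n)%nat -> i <> j -> m <= geo_var (edge_param n th i j) <= M) ->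
  (forall k, (k < 2 * n - 1)%nat -> sumR (2 * n - 1) (fun l => jacobian n th k l * x l) = 0) ->
  forall k, (k < 2 * n - 1)%nat -> x k = 0.
Proof.
intros Hn Hm HmM Hv HJ k Hk.
assert (Hzero : forall i, sum_skip n i (fun _ => 0) = 0)
  by (intros; apply sumR_zero; intros; destruct (_ =? _)%nat; reflexivity).
assert (Hx : Rabs (x k) <= 10 * 0 * M / ((INR n - 1) * m * m)).
{ apply (jacobian_solution_bound n th (fun _ _ => 0)); auto; try lra.
  - intros k' Hk'. rewrite HJ by exact Hk'. unfold margin, rowsum, colsum.
    destruct (k' <? n)%nat; symmetry; apply Hzero.
  - intros. unfold rowsum. rewrite Hzero, Rabs_R0. lra.
  - intros. unfold colsum. rewrite Hzero, Rabs_R0. lra. }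
rewrite !Rmult_0_r, Rmult_0_l, Rdiv_0_l in Hx.
apply Rabs_le_between in Hx. lra.
Qed.

Lemma inverse_apply N J B F : is_inverse N J B -> forall k, (k < N)%nat ->
  sumR N (fun l => J k l * sumR N (fun m => B l m * F m)) = F k.
Proof.
intros HB k Hk.
rewrite (sumR_ext N _ (fun l => sumR N (fun m => J k l * B l m * F m)))
  by (intros; rewrite <- sumR_scal; apply sumR_ext; intros; ring).
rewrite sumR_swap, <- (sumR_basis N k F Hk). apply sumR_ext. intros m Hm.
rewrite (sumR_ext N _ (fun l => F m * (J k l * B l m))) by (intros; ring).
rewrite sumR_scal, (proj1 (HB k m Hk Hm)). unfold basis. ring.
Qed.

Lemma degree_noise_rate gamma n q : 0 < gamma -> (2 <= n)%nat -> 0 < q ->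
  sqrt (8 * (INR n - 1) * ln (INR n) / (gamma * q ^ 2)) / (INR n - 1)
  <= sqrt (16 / gamma) / q * sqrt (ln (INR n) / INR n).
Proof.
intros Hg Hn Hq.
assert (Hnr : 2 <= INR n) by (replace 2 with (INR 2) by (simpl; ring); apply le_INR; exact Hn).
assert (HL : 0 <= ln (INR n)) by (rewrite <- ln_1; apply Rlt_le, ln_increasing; lra).
set (L := ln (INR n)) in *. set (nr := INR n) in *.
rewrite <- (sqrt_pow2 (nr - 1)) at 2 by lra. rewrite <- (sqrt_pow2 q) at 2 by lra.
rewrite <- (sqrt_div_alt _ ((nr - 1) ^ 2)), <- (sqrt_div_alt _ (q ^ 2)) by (apply pow_lt; lra).
rewrite <- sqrt_mult by (unfold Rdiv; repeat apply Rmult_le_pos;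
                         try apply Rlt_le, Rinv_0_lt_compat; try apply pow_lt; lra).
apply sqrt_le_1_alt.
replace (8 * (nr - 1) * L / (gamma * q ^ 2) / (nr - 1) ^ 2)
  with (8 * L / (gamma * q ^ 2) * / (nr - 1)) by (field; repeat split; lra).
replace (16 / gamma / q ^ 2 * (L / nr)) with (8 * L / (gamma * q ^ 2) * (2 / nr))
  by (field; repeat split; lra).
apply Rmult_le_compat_l.
- apply Rmult_le_pos; [lra | apply Rlt_le, Rinv_0_lt_compat, Rmult_lt_0_compat; [lra | apply pow_lt; lra]].
- apply (Rmult_le_reg_r (nr * (nr - 1))); [nra|].
  replace (/ (nr - 1) * (nr * (nr - 1))) with nr by (field; lra).
  replace (2 / nr * (nr * (nr - 1))) with (2 * (nr - 1)) by (field; lra). lra.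
Qed.

Lemma geo_var_ratio_le q Q : 0 < q <= Q ->
  geo_var q / (geo_var Q * geo_var Q) <= exp (3 * Q) / q ^ 2.
Proof.
intros [Hq HqQ]. unfold geo_var.
assert (Hx1 : 1 + q < exp q) by (apply exp_ineq1; lra).
assert (HxY : exp q <= exp Q) by (destruct (Req_dec q Q); [subst; lra | apply Rlt_le, exp_increasing; lra]).
replace (3 * Q) with (Q + Q + Q) by ring. rewrite !exp_plus.
set (x := exp q) in *. set (y := exp Q) in *.
assert (Hy4 : (y - 1) ^ 4 <= y ^ 4) by (apply pow_incr; lra).
assert (Hq2 : q ^ 2 <= (x - 1) ^ 2) by (apply pow_incr; lra).
assert (Hkey : x * (y - 1) ^ 4 * q ^ 2 <= y * y ^ 4 * (x - 1) ^ 2).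
{ apply Rmult_le_compat; [| apply pow_le; lra | | exact Hq2].
  - apply Rmult_le_pos; [lra | apply pow_le; lra].
  - apply Rmult_le_compat; [lra | apply pow_le; lra | lra | exact Hy4]. }
apply (Rmult_le_reg_r ((x - 1) ^ 2 * y ^ 2 * q ^ 2)).
{ repeat apply Rmult_lt_0_compat; try apply pow_lt; lra. }
replace (x / (x - 1) ^ 2 / (y / (y - 1) ^ 2 * (y / (y - 1) ^ 2)) * ((x - 1) ^ 2 * y ^ 2 * q ^ 2))
  with (x * (y - 1) ^ 4 * q ^ 2) by (field; repeat split; lra).
replace (y * y * y / q ^ 2 * ((x - 1) ^ 2 * y ^ 2 * q ^ 2)) with (y * y ^ 4 * (x - 1) ^ 2)
  by (field; lra).
exact Hkey.
Qed.

Lemma solution_rate_le gamma n q Q : 0 < gamma -> (2 <= n)%nat -> 0 < q <= Q ->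
  10 * sqrt (8 * (INR n - 1) * ln (INR n) / (gamma * q ^ 2)) * geo_var q
    / ((INR n - 1) * geo_var Q * geo_var Q)
  <= 10 * sqrt (16 / gamma)
       * (/ q * (exp (3 * Q) * (1 + / q ^ 4) + exp Q) * sqrt (ln (INR n) / INR n)).
Proof.
intros Hg Hn [Hq HqQ].
assert (Hnr : 2 <= INR n) by (replace 2 with (INR 2) by (simpl; ring); apply le_INR; exact Hn).
assert (HvQ := geo_var_pos Q ltac:(lra)).
set (E := sqrt (8 * (INR n - 1) * ln (INR n) / (gamma * q ^ 2))).
set (S := sqrt (ln (INR n) / INR n)).
assert (Hnoise : E / (INR n - 1) <= sqrt (16 / gamma) / q * S) by (apply degree_noise_rate; auto).
assert (Hratio : geo_var q / (geo_var Q * geo_var Q) <= exp (3 * Q) * (1 + / q ^ 4) + exp Q).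
{ apply Rle_trans with (exp (3 * Q) / q ^ 2); [apply geo_var_ratio_le; lra|].
  assert (Ht : 0 < / q ^ 2) by (apply Rinv_0_lt_compat, pow_lt; lra).
  replace (/ q ^ 4) with (/ q ^ 2 * / q ^ 2) by (field; lra).
  assert (/ q ^ 2 <= 1 + / q ^ 2 * / q ^ 2) by nra.
  pose proof (exp_pos Q). pose proof (exp_pos (3 * Q)).
  unfold Rdiv. apply Rle_trans with (exp (3 * Q) * (1 + / q ^ 2 * / q ^ 2)); [|lra].
  apply Rmult_le_compat_l; lra. }
replace (10 * E * geo_var q / ((INR n - 1) * geo_var Q * geo_var Q))
  with (10 * (E / (INR n - 1) * (geo_var q / (geo_var Q * geo_var Q)))) by (field; lra).
replace (10 * sqrt (16 / gamma) * (/ q * (exp (3 * Q) * (1 + / q ^ 4) + exp Q) * S))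
  with (10 * (sqrt (16 / gamma) / q * S * (exp (3 * Q) * (1 + / q ^ 4) + exp Q)))
  by (field; lra).
apply Rmult_le_compat_l; [lra|]. apply Rmult_le_compat; auto.
- apply Rmult_le_pos; [apply sqrt_pos | apply Rlt_le, Rinv_0_lt_compat; lra].
- apply Rlt_le, Rdiv_lt_0_compat; [apply geo_var_pos; lra | nra].
Qed.

Module MatrixInverse.
Import mathcomp.boot.all_boot mathcomp.algebra.all_algebra mathcomp.reals_stdlib.Rstruct.
Import GRing.Theory.
Local Open Scope ring_scope.

Lemma sumR_big N (g : nat -> R) : sumR N g = \sum_(i < N) g i.
Proof. by elim: N => [|N IH]; rewrite ?big_ord0 // big_ord_recr /= -IH sumR_S. Qed.

Definition ord_ext {N} (f : 'I_N -> R) (l : nat) : R := if insub l is Some l' then f l' else 0.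

Lemma ord_extE {N} (f : 'I_N -> R) (i : 'I_N) : ord_ext f i = f i.
Proof. by rewrite /ord_ext valK. Qed.

Lemma inverse_exists N (J : nat -> nat -> R) :
  (forall x : nat -> R, (forall k, lt k N -> sumR N (fun l => J k l * x l) = 0) ->
     forall k, lt k N -> x k = 0) ->
  exists B, is_inverse N J B.
Proof.
move=> J_inj; pose Jm : 'M[R]_N := \matrix_(i, j) J i j.
have Jm_unit : Jm \in unitmx.
  rewrite unitmxE unitfE -det_tr; apply/negP => /det0P [v /eqP v_neq0 vJ]; apply: v_neq0.
  apply/rowP => i; rewrite mxE -(ord_extE (v ord0)); apply: J_inj; last exact/ltP.
  move=> k /ltP kN; have := congr1 (fun w : 'rV[R]_N => w ord0 (Ordinal kN)) vJ.
  rewrite !mxE sumR_big => vJk; apply: eq_trans vJk; apply: eq_bigr => l _.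
  by rewrite !mxE ord_extE /= mulrC.
pose B i k := ord_ext (fun i' => ord_ext (fun k' => invmx Jm i' k') k) i.
exists B => i k /ltP iN /ltP kN.
have BE (i' k' : 'I_N) : B i' k' = invmx Jm i' k' by rewrite /B !ord_extE.
have -> : (if (i =? k)%nat then 1 else 0) = (1%:M : 'M[R]_N) (Ordinal iN) (Ordinal kN).
  rewrite mxE (_ : (Ordinal iN == Ordinal kN) = (i == k)) //.
  by case: (Nat.eqb_spec i k) => [->|/eqP/negbTE ->]; rewrite ?eqxx.
rewrite !sumR_big -{1}(mulmxV Jm_unit) -(mulVmx Jm_unit) !mxE.
by split; apply: eq_bigr => l _; rewrite mxE ?(BE l (Ordinal kN)) ?(BE (Ordinal iN) l).
Qed.

End MatrixInverse.

Theorem lemma6 :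
  forall gamma : R, 0 < gamma ->
  exists C : R, 0 < C /\
  forall (q Q : nat -> R) (theta : nat -> nat -> R),
    (forall n, (2 <= n)%nat -> 0 < q n <= Q n) ->
    (forall n, (2 <= n)%nat -> forall i j, (i < n)%nat -> (j < n)%nat -> i <> j ->
        q n <= alpha_of (theta n) i + beta_of n (theta n) j <= Q n) ->
    little_o_n (fun n => M_n (q n) / m_n (Q n)) ->
    exists N : nat, forall n : nat, (2 <= n)%nat -> (N <= n)%nat ->
    forall A : nat -> nat -> nat,
      (forall i, (i < n)%nat ->
         Rabs (outdeg n A i - Eoutdeg n (theta n) i)
           <= sqrt (8 * (INR n - 1) * ln (INR n) / (gamma * q n ^ 2))) ->
      (forall j, (j < n)%nat ->
         Rabs (indeg n A j - Eindeg n (theta n) j)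
           <= sqrt (8 * (INR n - 1) * ln (INR n) / (gamma * q n ^ 2))) ->
      exists J B : nat -> nat -> R,
        is_jacobian n A (theta n) J /\
        is_inverse (2 * n - 1) J B /\
        forall k, (k < 2 * n - 1)%nat ->
          Rabs (sumR (2 * n - 1) (fun l => B k l * Fmap n A (theta n) l))
            <= C * (/ q n * (exp (3 * Q n) * (1 + / q n ^ 4) + exp (Q n))
                    * sqrt (ln (INR n) / INR n)).
Proof.
intros gamma Hg. exists (10 * sqrt (16 / gamma)).
split; [apply Rmult_lt_0_compat; [lra | apply sqrt_lt_R0, Rdiv_lt_0_compat; lra]|].
intros q Q theta Hq Hedge _. exists 3%nat. intros n Hn2 Hn3 A Hout Hin.
destruct (Hq n Hn2) as [Hq0 HqQ].
assert (Hv : forall i j, (i < n)%nat -> (j < n)%nat -> i <> j ->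
          geo_var (Q n) <= geo_var (edge_param n (theta n) i j) <= geo_var (q n)).
{ intros i j Hi Hj Hij. destruct (Hedge n Hn2 i j Hi Hj Hij).
  split; apply geo_var_antimono; unfold edge_param; lra. }
assert (HmM : geo_var (Q n) <= geo_var (q n)) by (apply geo_var_antimono; lra).
assert (Hm := geo_var_pos (Q n) ltac:(lra)).
destruct (MatrixInverse.inverse_exists (2 * n - 1) (jacobian n (theta n))) as [B HB].
{ intros x. apply (jacobian_injective n (theta n) x _ _ Hn3 Hm HmM Hv). }
exists (jacobian n (theta n)), B. split; [|split; [exact HB|]].
{ apply jacobian_correct. intros i j Hi Hj Hij. destruct (Hedge n Hn2 i j Hi Hj Hij).
  unfold edge_param. lra. }
intros k Hk. eapply Rle_trans; [|apply solution_rate_le; auto].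
apply (jacobian_solution_bound n (theta n) (residual n A (theta n))
         (fun k => sumR (2 * n - 1) (fun l => B k l * Fmap n A (theta n) l))); auto.
- apply sqrt_pos.
- intros k' Hk'. rewrite <- Fmap_margin. apply (inverse_apply _ _ _ _ HB k' Hk').
- intros i Hi. rewrite rowsum_residual. auto.
- intros j Hj. rewrite colsum_residual. auto.
Qed.
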